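(* Let $(A,\mathfrak m)$ be a Noetherian local ring with infinite residue field, $\mathfrak q$ an $\mathfrak m$-primary ideal, $M$ a finitely generated $A$-module of dimension one, $\mathbb M=\{M_j\}_{j\ge0}$ a good $\mathfrak q$-filtration of $M$, $a$ an $\mathbb M$-superficial element for $\mathfrak q$ and $J=(a)$. Let $\mathbb N=\{a^jM\}_{j\ge0}$ and let $\mathbb E$ be the filtration $M\supseteq M_1\supseteq aM_1\supseteq a^2M_1\supseteq\cdots$ (i.e. $E_0=M$, $E_n=a^{n-1}M_1$ for $n\ge1$). Then $$e_1(\mathbb E)-e_1(\mathbb N)\ge e_0(\mathbb M)-h_0(\mathbb M),$$ where $h_0(\mathbb M)=\lambda(M/M_1)$.
   Context: $\lambda$ denotes length. A $\mathfrak q$-filtration of $M$ is a chain of submodules $M=M_0\supseteq M_1\supseteq\cdots$ with $\mathfrak qM_j\subseteq M_{j+1}$; it is good if $M_{j+1}=\mathfrak qM_j$ for $j\gg0$ (similarly for the ideal $J$; $\mathbb E$ and $\mathbb N$ are good $J$-filtrations). For such a filtration $\{F_j\}$ of the one-dimensional module $M$, write $\sum_{j\ge0}\lambda(F_j/F_{j+1})z^j=h(z)/(1-z)$ with $h\in\mathbb Z[z]$ and $e_i=h^{(i)}(1)/i!$; $h_0=h(0)$. An element $a\in\mathfrak q$ is $\mathbb M$-superficial for $\mathfrak q$ if there is $c\ge0$ with $(M_{j+1}:_Ma)\cap M_c=M_j$ for all $j\ge c$. *)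

From mathcomp Require Import all_boot all_algebra.
Set Implicit Arguments. Unset Strict Implicit. Unset Printing Implicit Defensive.
Import GRing.Theory.
Local Open Scope ring_scope.

Definition mset (T : Type) := T -> Prop.
Definition msub (T : Type) (A B : mset T) := forall x, A x -> B x.
Definition meq (T : Type) (A B : mset T) := forall x, A x <-> B x.
Definition mssub (T : Type) (A B : mset T) := msub A B /\ exists x, B x /\ ~ A x.

Definition is_ideal (R : comNzRingType) (I : mset R) :=
  [/\ I 0, (forall x y, I x -> I y -> I (x + y)) & (forall r x, I x -> I (r * x))].
Definition is_prime (R : comNzRingType) (P : mset R) :=
  [/\ is_ideal P, ~ P 1 & forall x y, P (x * y) -> P x \/ P y].
Definition is_unit_el (R : comNzRingType) (x : R) := exists y, x * y = 1.

Definition noetherian (R : comNzRingType) :=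
  forall I : nat -> mset R, (forall n, is_ideal (I n)) ->
    (forall n, msub (I n) (I n.+1)) ->
    exists N, forall n, (N <= n)%N -> meq (I n) (I N).

(* (R, m) is local: m is a proper ideal and every element outside m is a unit
   (so m is the unique maximal ideal). *)
Definition is_local (R : comNzRingType) (m : mset R) :=
  [/\ is_ideal m, ~ m 1 & forall x, ~ m x -> is_unit_el x].

(* The residue field R/m is infinite: infinitely many pairwise distinct classes. *)
Definition infinite_residue (R : comNzRingType) (m : mset R) :=
  exists f : nat -> R, forall i j, i <> j -> ~ m (f i - f j).

Definition m_primary (R : comNzRingType) (m q : mset R) :=
  [/\ is_ideal q, msub q m & forall x, m x -> exists n, q (x ^+ n)].

Definition is_submod (R : comNzRingType) (M : lmodType R) (N : mset M) :=
  [/\ N 0, (forall x y, N x -> N y -> N (x + y)) & (forall (r : R) x, N x -> N (r *: x))].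

Definition fin_gen (R : comNzRingType) (M : lmodType R) :=
  exists n (g : 'I_n -> M), forall x : M, exists c : 'I_n -> R, x = \sum_i c i *: g i.

(* Krull dimension of M is one: dim (R / Ann M) = 1. *)
Definition ann (R : comNzRingType) (M : lmodType R) : mset R :=
  fun r => forall x : M, r *: x = 0.
Definition prime_chain_above (R : comNzRingType) (I : mset R) (n : nat) :=
  exists p : nat -> mset R,
    (forall i, (i <= n)%N -> is_prime (p i) /\ msub I (p i)) /\
    (forall i, (i < n)%N -> mssub (p i) (p i.+1)).
Definition module_dim_one (R : comNzRingType) (M : lmodType R) :=
  prime_chain_above (ann M) 1 /\ ~ prime_chain_above (ann M) 2.

(* Length lambda(P/N) = n : maximal length of a strict chain of submodules
   N = C_0 < C_1 < ... < C_n = P. *)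
Definition strict_chain (R : comNzRingType) (M : lmodType R) (P N : mset M) (n : nat) :=
  exists c : nat -> mset M,
    [/\ meq (c 0%N) N, meq (c n) P, (forall i, (i <= n)%N -> is_submod (c i))
      & (forall i, (i < n)%N -> mssub (c i) (c i.+1))].
Definition has_length (R : comNzRingType) (M : lmodType R) (P N : mset M) (n : nat) :=
  strict_chain P N n /\ forall k, strict_chain P N k -> (k <= n)%N.

Definition ideal_mul (R : comNzRingType) (M : lmodType R) (q : mset R) (N : mset M) : mset M :=
  fun x => exists n (r : 'I_n -> R) (y : 'I_n -> M),
    (forall i, q (r i) /\ N (y i)) /\ x = \sum_i r i *: y i.

Definition q_filtration (R : comNzRingType) (M : lmodType R) (q : mset R) (F : nat -> mset M) :=
  [/\ (forall x, F 0%N x), (forall j, is_submod (F j)),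
      (forall j, msub (F j.+1) (F j)) & (forall j, msub (ideal_mul q (F j)) (F j.+1))].
Definition good_filtration (R : comNzRingType) (M : lmodType R) (q : mset R) (F : nat -> mset M) :=
  q_filtration q F /\ exists j0, forall j, (j0 <= j)%N -> meq (F j.+1) (ideal_mul q (F j)).

Definition superficial (R : comNzRingType) (M : lmodType R) (q : mset R) (F : nat -> mset M) (a : R) :=
  q a /\ exists c, forall j, (c <= j)%N ->
    meq (fun x => F j.+1 (a *: x) /\ F c x) (F j).

Definition N_filt (R : comNzRingType) (M : lmodType R) (a : R) : nat -> mset M :=
  fun j x => exists y : M, x = a ^+ j *: y.
Definition E_filt (R : comNzRingType) (M : lmodType R) (a : R) (F : nat -> mset M) : nat -> mset M :=
  fun n x => match n with
             | 0%N => True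
             | k.+1 => exists y, F 1%N y /\ x = a ^+ k *: y
             end.

(* h is the numerator of the Hilbert series of F:
   sum_j lambda(F_j/F_{j+1}) z^j = h(z)/(1-z). *)
Definition hilb_num (R : comNzRingType) (M : lmodType R) (F : nat -> mset M) (h : {poly int}) :=
  forall j, exists n, has_length (F j) (F j.+1) n /\ (n%:Z = \sum_(i < j.+1) h`_i).

(* e_i = h^{(i)}(1)/i! *)
Definition hilb_e (i : nat) (h : {poly int}) : int := (h^`N(i)).[1].

From mathcomp Require Import all_boot all_order all_algebra.
From mathcomp Require Import zify.
From Stdlib Require Import Classical FunctionalExtensionality PropExtensionality.
Import Order.TTheory GRing.Theory Num.Theory.
Local Open Scope ring_scope.
Set Implicit Arguments. Unset Strict Implicit.

(* For a filtration X of M whose Hilbert series has numerator h, the colength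
   lambda(M/X_n) is the partial sum of lambda(X_j/X_{j+1}), which equals
   e_0 n - e_1 for n >> 0.  The containments a^n M <= M_n, a^{n+1} M <= a^n M_1
   <= a^n M, together with subadditivity of length and the surjection
   M/M_1 -> a^n M/a^n M_1, give for all n
     lambda(M/M_n)      <= lambda(M/a^n M),
     lambda(M/a^n M_1)  <= lambda(M/a^n M) + lambda(M/M_1),
     lambda(M/a^(n+1)M) <= lambda(M/a^n M_1) + lambda(M/aM).
   Comparing leading terms gives e_0(M) <= e_0(N) = e_0(E); the constant terms of
   the second inequality then give e_0(E) - lambda(M/M_1) <= e_1(E) - e_1(N), and
   h_0(M) = lambda(M/M_1). *)

Definition hilb_fun (h : {poly int}) (j : nat) : int := \sum_(i < j.+1) h`_i.

Definition hilb_samuel (h : {poly int}) (n : nat) : int := \sum_(j < n) hilb_fun h j.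

Lemma hilb_samuel_coef (h : {poly int}) n :
  hilb_samuel h n = \sum_(i < n) h`_i *+ (n - i).
Proof.
elim: n => [|n IH]; first by rewrite /hilb_samuel !big_ord0.
rewrite /hilb_samuel big_ord_recr /= -/(hilb_samuel h n) IH /hilb_fun.
rewrite [RHS]big_ord_recr /= subSnn mulr1n big_ord_recr /= addrA -big_split /=.
congr (_ + _); apply: eq_bigr => i _.
by rewrite subSn ?mulrSr // ltnW.
Qed.

Lemma horner1_wide (h : {poly int}) n : (size h <= n)%N -> h.[1] = \sum_(i < n) h`_i.
Proof.
move=> le_hn; rewrite (horner_coef_wide _ le_hn).
by apply: eq_bigr => i _; rewrite expr1n mulr1.
Qed.

Lemma hilb_e0E (h : {poly int}) : hilb_e 0 h = h.[1].
Proof. by rewrite /hilb_e nderivn0. Qed.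

Lemma hilb_e1_wide (h : {poly int}) n :
  (size h <= n)%N -> hilb_e 1 h = \sum_(i < n) h`_i *+ i.
Proof.
move=> le_hn; have le_h'n : (size h^`N(1) <= n)%N.
  exact: leq_trans (size_poly _ _) (leq_trans (leq_subr _ _) le_hn).
rewrite /hilb_e (horner_coef_wide _ le_h'n).
under eq_bigr do rewrite coef_nderivn expr1n mulr1 add1n bin1.
have -> : \sum_(i < n) h`_i.+1 *+ i.+1 = \sum_(i < n.+1) h`_i *+ i.
  by rewrite big_ord_recl /= mulr0n add0r.
by rewrite big_ord_recr /= (nth_default _ le_hn) mul0rn addr0.
Qed.

Lemma hilb_samuel_poly (h : {poly int}) n : (size h <= n)%N ->
  hilb_samuel h n = hilb_e 0 h * n%:Z - hilb_e 1 h.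
Proof.
move=> le_hn; rewrite hilb_samuel_coef hilb_e0E (horner1_wide le_hn).
rewrite (hilb_e1_wide le_hn) mulr_suml -sumrB; apply: eq_bigr => i _.
by rewrite mulrnBr ?(ltnW (ltn_ord i)) // -mulr_natr natz.
Qed.

Lemma eventually_le_slope (a b c d : int) (n0 : nat) :
  (forall n, (n0 <= n)%N -> a * n%:Z + b <= c * n%:Z + d) -> a <= c.
Proof.
move=> H; case: (lerP a c) => // lt_ca.
have := H (n0 + `|d - b|).+1 (leqW (leq_addr _ _)).
have := lez_abs (d - b); rewrite -addn1 !PoszD; nia.
Qed.

Lemma hilb_e1_comparison (hE hN hM : {poly int}) (cE cN : int) :
  (forall n, hilb_samuel hM n <= hilb_samuel hN n) ->
  (forall n, hilb_samuel hE n.+1 <= hilb_samuel hN n + cE) ->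
  (forall n, hilb_samuel hN n.+1 <= hilb_samuel hE n.+1 + cN) ->
  hilb_e 0 hM - cE <= hilb_e 1 hE - hilb_e 1 hN.
Proof.
move=> leMN leEN leNE; pose n0 := (size hE + size hN + size hM)%N.
have poly (h : {poly int}) n : (size h <= n0)%N -> (n0 <= n)%N ->
    hilb_samuel h n = hilb_e 0 h * n%:Z - hilb_e 1 h.
  by move=> le_h le_n; apply/hilb_samuel_poly/(leq_trans le_h).
have [wE wN wM] : [/\ size hE <= n0, size hN <= n0 & size hM <= n0]%N.
  by split; rewrite /n0; lia.
pose fE := hilb_e 1 hE; pose fN := hilb_e 1 hN; pose fM := hilb_e 1 hM.
have le_eMN : hilb_e 0 hM <= hilb_e 0 hN.
  apply: (@eventually_le_slope _ (- fM) _ (- fN) n0) => n le_n.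
  by have := leMN n; rewrite !poly //; lia.
have le_eEN : hilb_e 0 hE <= hilb_e 0 hN.
  apply: (@eventually_le_slope _ (hilb_e 0 hE - fE) _ (cE - fN) n0) => n le_n.
  by have := leEN n; rewrite !poly ?(leqW le_n) // -addn1 PoszD; lia.
have le_eNE : hilb_e 0 hN <= hilb_e 0 hE.
  apply: (@eventually_le_slope _ (hilb_e 0 hN - fN) _ (hilb_e 0 hE - fE + cN) n0).
  by move=> n le_n; have := leNE n; rewrite !poly ?(leqW le_n) // -addn1 PoszD; lia.
have eq_eEN : hilb_e 0 hE = hilb_e 0 hN by apply/le_anti/andP.
have := leEN n0; rewrite !poly ?(leqW (leqnn n0)) // eq_eEN -addn1 PoszD.
by move: le_eMN; rewrite -eq_eEN -/fE -/fN; lia.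
Qed.

Section Submodules.
Variables (R : comNzRingType) (M : lmodType R).
Implicit Types (A B C D X : mset M) (r : R).

Definition msetT : mset M := fun _ => True.
Definition msum A B : mset M := fun z => exists x y, [/\ A x, B y & z = x + y].
Definition mcap A B : mset M := fun z => A z /\ B z.
Definition mimg r A : mset M := fun z => exists y, A y /\ z = r *: y.
Definition mpre r A X : mset M := fun x => A x /\ X (r *: x).

Lemma mext A B : meq A B -> A = B.
Proof.
move=> eqAB; apply: functional_extensionality => x.
exact: propositional_extensionality (eqAB x).
Qed.

Lemma msub_antisym A B : msub A B -> msub B A -> A = B.
Proof. by move=> AB BA; apply: mext => x; split; [apply: AB | apply: BA]. Qed.

Lemma msub_not_mssub B A : msub B A -> ~ mssub B A -> A = B.
Proof.
move=> BA nBA; apply: msub_antisym => // x Ax.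
by apply: NNPP => nBx; apply: nBA; split => //; exists x.
Qed.

Lemma submod0 A : is_submod A -> A 0.
Proof. by case. Qed.

Lemma submodD A x y : is_submod A -> A x -> A y -> A (x + y).
Proof. by case=> _ + _; apply. Qed.

Lemma submodZ A r x : is_submod A -> A x -> A (r *: x).
Proof. by case=> _ _; apply. Qed.

Lemma submodB A x y : is_submod A -> A x -> A y -> A (x - y).
Proof. by move=> SA Ax Ay; apply: submodD => //; rewrite -scaleN1r; apply: submodZ. Qed.

Lemma msetT_submod : is_submod msetT.
Proof. by []. Qed.

Lemma msum_submod A B : is_submod A -> is_submod B -> is_submod (msum A B).
Proof.
move=> SA SB; split.
- by exists 0, 0; rewrite addr0; split => //; apply: submod0.
- move=> _ _ [x1 [y1 [A1 B1 ->]]] [x2 [y2 [A2 B2 ->]]].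
  by exists (x1 + x2), (y1 + y2); rewrite addrACA; split => //; apply: submodD.
- move=> r _ [x [y [Ax By ->]]]; exists (r *: x), (r *: y).
  by rewrite scalerDr; split => //; apply: submodZ.
Qed.

Lemma mcap_submod A B : is_submod A -> is_submod B -> is_submod (mcap A B).
Proof.
move=> SA SB; split; first by split; apply: submod0.
- by move=> x y [? ?] [? ?]; split; apply: submodD.
- by move=> r x [? ?]; split; apply: submodZ.
Qed.

Lemma mimg_submod r A : is_submod A -> is_submod (mimg r A).
Proof.
move=> SA; split.
- by exists 0; rewrite scaler0; split => //; apply: submod0.
- move=> _ _ [x [Ax ->]] [y [Ay ->]]; exists (x + y).
  by rewrite scalerDr; split => //; apply: submodD.
- move=> s _ [x [Ax ->]]; exists (s *: x).
  by rewrite !scalerA mulrC; split => //; apply: submodZ.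
Qed.

Lemma mpre_submod r A X : is_submod A -> is_submod X -> is_submod (mpre r A X).
Proof.
move=> SA SX; split.
- by split; rewrite ?scaler0; apply: submod0.
- by move=> x y [? ?] [? ?]; split; rewrite ?scalerDr; apply: submodD.
- move=> s x [? ?]; split; first exact: submodZ.
  by rewrite scalerA mulrC -scalerA; apply: submodZ.
Qed.

Lemma mssub_chain_mono (c : nat -> mset M) n :
  (forall i, (i < n)%N -> mssub (c i) (c i.+1)) ->
  forall i j, (i <= j <= n)%N -> msub (c i) (c j).
Proof.
move=> c_incr i j /andP[]; elim: j => [|j IH]; first by rewrite leqn0 => /eqP -> _.
rewrite leq_eqVlt => /orP[/eqP -> _ //| lt_ij lt_jn x cix].
by case: (c_incr j lt_jn) => + _; apply; apply: IH (ltnW lt_jn) _ cix.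
Qed.

Lemma strict_chain_submod A C k : strict_chain A C k ->
  [/\ is_submod A, is_submod C & msub C A].
Proof.
case=> c [/mext <- /mext <- Sc c_incr]; split; try exact: Sc.
by apply: (mssub_chain_mono c_incr); rewrite leqnn.
Qed.

Lemma strict_chain0 A : is_submod A -> strict_chain A A 0.
Proof. by move=> SA; exists (fun _ => A); split. Qed.

Lemma strict_chain0_eq A C : strict_chain A C 0 -> A = C.
Proof. by case=> c [/mext <- /mext <-]. Qed.

Lemma strict_chainxx A k : strict_chain A A k -> k = 0%N.
Proof.
case=> c [/mext c0 /mext ck _ c_incr]; case: k ck c_incr => // k ck c_incr.
have [_ [x [c1x nc0x]]] := c_incr 0%N isT; exfalso; apply: nc0x.
by rewrite c0 -ck; apply: (mssub_chain_mono c_incr (i := 1)) c1x; rewrite leqnn.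
Qed.

Lemma strict_chain_last A C k : strict_chain A C k.+1 ->
  exists2 D, mssub D A & strict_chain D C k.
Proof.
case=> c [c0 /mext <- Sc c_incr]; exists (c k); first exact: c_incr.
by exists c; split => // i le_ik; [apply: Sc | apply: c_incr]; apply: leqW.
Qed.

Lemma strict_chain_cat A B C k1 k2 : strict_chain A B k1 -> strict_chain B C k2 ->
  strict_chain A C (k2 + k1).
Proof.
case=> c1 [/mext c10 /mext c1k S1 incr1]; case=> c2 [/mext c20 /mext c2k S2 incr2].
subst; exists (fun i => if (i <= k2)%N then c2 i else c1 (i - k2)%N); split.
- by rewrite leq0n.
- case: k1 incr1 S1 => [|k1] _ _; first by rewrite addn0 leqnn c2k.
  by rewrite leqNgt addnS ltnS leq_addr /= -addnS addKn.
- move=> i le_i; case: (leqP i k2) => [le_ik2|lt_k2i]; first exact: S2.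
  by apply: S1; rewrite leq_subLR.
- move=> i lt_i; case: (leqP i.+1 k2) => [le_ik2|lt_k2i].
    by rewrite (ltnW le_ik2); apply: incr2.
  case: (leqP i k2) => [le_ik2|lt_k2i'].
    have -> : i = k2 by apply/eqP; rewrite eqn_leq le_ik2 -ltnS.
    by rewrite subSnn c2k; apply: incr1; move: lt_i; lia.
  by rewrite subSn ?(ltnW lt_k2i') //; apply: incr1; move: lt_i lt_k2i'; lia.
Qed.

Lemma strict_chain_cons A B C k : is_submod A -> mssub B A -> strict_chain B C k ->
  strict_chain A C k.+1.
Proof.
move=> SA BA cBC; have [SB _ _] := strict_chain_submod cBC; rewrite -addn1.
apply: strict_chain_cat cBC; exists (fun i => if i is 0%N then B else A).
by split => // -[].
Qed.

Lemma strict_chain_widen_top A B C k : strict_chain B C k -> msub B A -> is_submod A ->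
  exists2 k', (k <= k')%N & strict_chain A C k'.
Proof.
move=> cBC BA SA; case: (classic (mssub B A)) => [BA'|nBA].
  by exists k.+1 => //; apply: strict_chain_cons cBC.
by rewrite (msub_not_mssub BA nBA); exists k.
Qed.

Lemma strict_chain_widen_bot A B C k : strict_chain A B k -> msub C B -> is_submod C ->
  exists2 k', (k <= k')%N & strict_chain A C k'.
Proof.
move=> cAB CB SC; have [_ SB _] := strict_chain_submod cAB.
case: (classic (mssub C B)) => [CB'|nCB].
  exists (1 + k)%N; first by rewrite add1n.
  by apply: strict_chain_cat cAB _; apply: strict_chain_cons (strict_chain0 SC).
by rewrite -(msub_not_mssub CB nCB); exists k.
Qed.

Lemma strict_chain_add Y X B k : strict_chain Y X k -> is_submod B ->
  msub (mcap B Y) X -> strict_chain (msum Y B) (msum X B) k.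
Proof.
move=> cYX SB BYX; have [SY _ _] := strict_chain_submod cYX.
case: cYX => c [/mext c0 /mext ck Sc c_incr]; subst.
have c_mono := mssub_chain_mono c_incr.
exists (fun i => msum (c i) B); split => // [i le_ik|i lt_ik].
  by apply: msum_submod => //; apply: Sc.
have [c_sub [x [c1x nc0x]]] := c_incr i lt_ik; split.
  by move=> _ [y [b [cy Bb ->]]]; exists y, b; split => //; apply: c_sub.
exists x; split; first by exists x, 0; rewrite addr0; split => //; apply: submod0.
move=> [y [b [cy Bb xE]]]; apply: nc0x; rewrite xE.
have ckx : c k x by apply: (c_mono i.+1 k _ x c1x); rewrite lt_ik leqnn.
have cky : c k y by apply: (c_mono i k _ y cy); rewrite (ltnW lt_ik) leqnn.
have bE : b = x - y by rewrite xE addrC addKr.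
have c0b : c 0%N b by apply: BYX; split => //; rewrite bE; apply: submodB.
apply: submodD => //; first exact: Sc (ltnW lt_ik).
by apply: (c_mono 0%N i _ b c0b); rewrite (ltnW lt_ik).
Qed.

(* The top step D < A of a chain refines either above B (if D + B < A) or below B. *)
Lemma strict_chain_split_step A B D C k1 k2 :
  is_submod A -> is_submod B -> msub B A -> mssub D A ->
  strict_chain D (mcap B D) k1 -> strict_chain (mcap B D) C k2 ->
  exists k1' k2', [/\ (k1 + k2 < k1' + k2')%N, strict_chain A B k1' & strict_chain B C k2'].
Proof.
move=> SA SB BA [DA [z [Az nDz]]] c1 c2; have [SD _ _] := strict_chain_submod c1.
have c1B := strict_chain_add c1 SB (fun x Hx => Hx).
have BDB : msum (mcap B D) B = B.
  apply: msub_antisym => [_ [x [y [[Bx _] By ->]]]|x Bx]; first exact: submodD.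
  by exists 0, x; rewrite add0r; split => //; split; apply: submod0.
rewrite BDB in c1B.
have DB_A : msub (msum D B) A.
  by move=> _ [x [y [Dx By ->]]]; apply: submodD => //; [apply: DA | apply: BA].
case: (classic (mssub (msum D B) A)) => [DB_A'|/(msub_not_mssub DB_A) DBE].
  have [k2' le_k2 c2'] := strict_chain_widen_top c2 (fun x => @proj1 (B x) (D x)) SB.
  exists k1.+1, k2'; split => //; last exact: strict_chain_cons c1B.
  by rewrite addSn ltnS leq_add2l.
exists k1, k2.+1; split; [by rewrite addnS | by rewrite DBE |].
apply: (strict_chain_cons SB _ c2); split; first by move=> x [].
move: Az; rewrite DBE => -[x [b [Dx Bb zE]]]; exists b; split => // -[_ Db].
by apply: nDz; rewrite zE; apply: submodD.
Qed.

Lemma strict_chain_split k A B C : strict_chain A C k -> is_submod B ->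
  msub C B -> msub B A ->
  exists k1 k2, [/\ (k <= k1 + k2)%N, strict_chain A B k1 & strict_chain B C k2].
Proof.
elim: k A B C => [|k IH] A B C cAC SB CB BA.
  have [SA _ _] := strict_chain_submod cAC; move: CB BA; rewrite -(strict_chain0_eq cAC).
  move=> AB BA; rewrite (msub_antisym BA AB).
  by exists 0%N, 0%N; split => //; apply: strict_chain0.
have [SA _ _] := strict_chain_submod cAC.
have [D DA cDC] := strict_chain_last cAC; have [SD _ CD] := strict_chain_submod cDC.
have C_BD : msub C (mcap B D) by move=> x Cx; split; [apply: CB | apply: CD].
have [k1 [k2 [le_k c1 c2]]] :=
  IH D (mcap B D) C cDC (mcap_submod SB SD) C_BD (fun x => @proj2 (B x) (D x)).
have [k1' [k2' [lt_k c1' c2']]] := strict_chain_split_step SA SB BA DA c1 c2.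
by exists k1', k2'; split => //; apply: leq_ltn_trans lt_k.
Qed.

Lemma strict_chain_pre r A X k : is_submod A -> strict_chain (mimg r A) X k ->
  strict_chain A (mpre r A X) k.
Proof.
move=> SA [c [/mext c0 /mext ck Sc c_incr]]; subst.
exists (fun i => mpre r A (c i)); split => // [x|i le_ik|i lt_ik].
- by split=> [[]//|Ax]; split => //; rewrite ck; exists x.
- by apply: mpre_submod => //; apply: Sc.
have [c_sub [z [c1z nc0z]]] := c_incr i lt_ik; split.
  by move=> x [Ax cx]; split => //; apply: c_sub.
have : c k z by apply: (mssub_chain_mono c_incr (i := i.+1)) c1z; rewrite lt_ik leqnn.
rewrite ck => -[y [Ay zE]]; exists y; rewrite /mpre -zE.
by split=> [|[]] //; split.
Qed.

(* [length_le A B n] means lambda(A/B) <= n. *)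
Definition length_le A B n := forall k, strict_chain A B k -> (k <= n)%N.

Lemma length_lexx A : length_le A A 0.
Proof. by move=> k /strict_chainxx ->. Qed.

Lemma length_le_add A B C n1 n2 : is_submod B -> msub C B -> msub B A ->
  length_le A B n1 -> length_le B C n2 -> length_le A C (n1 + n2).
Proof.
move=> SB CB BA len1 len2 k cAC.
have [k1 [k2 [le_k c1 c2]]] := strict_chain_split cAC SB CB BA.
by apply: leq_trans le_k _; rewrite leq_add ?len1 ?len2.
Qed.

Lemma length_le_mono A C A' C' n : is_submod A -> is_submod C ->
  msub A' A -> msub C C' -> length_le A C n -> length_le A' C' n.
Proof.
move=> SA SC A'A CC' len k c.
have [k1 le1 c1] := strict_chain_widen_top c A'A SA.
have [k2 le2 c2] := strict_chain_widen_bot c1 CC' SC.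
by apply: leq_trans (leq_trans le1 le2) (len _ c2).
Qed.

Lemma length_le_img r A X n : is_submod A ->
  length_le A (mpre r A X) n -> length_le (mimg r A) X n.
Proof. by move=> SA len k /(strict_chain_pre SA)/len. Qed.

Lemma has_length_unique A B n n' : has_length A B n -> has_length A B n' -> n = n'.
Proof. by move=> [c len] [c' len']; apply/eqP; rewrite eqn_leq len' ?len. Qed.

Definition descending (X : nat -> mset M) :=
  (forall j, is_submod (X j)) /\ (forall j, msub (X j.+1) (X j)).

Lemma descending_sub0 (X : nat -> mset M) j : descending X -> msub (X j) (X 0%N).
Proof. by case=> _ DX; elim: j => // j IH x /DX /IH. Qed.

Lemma hilb_num_length (X : nat -> mset M) h : descending X -> hilb_num X h ->
  forall n, exists k, has_length (X 0%N) (X n) k /\ k%:Z = hilb_samuel h n.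
Proof.
move=> [SX DX] hX; elim=> [|n [k [[cn lenn] kE]]].
  exists 0%N; split; last by rewrite /hilb_samuel big_ord0.
  by split; [apply: strict_chain0 | apply: length_lexx].
have [l [[cl lenl] lE]] := hX n.
exists (k + l)%N; split; last first.
  by rewrite /hilb_samuel big_ord_recr /= -/(hilb_samuel h n) PoszD kE lE.
split; first by rewrite addnC; apply: strict_chain_cat cn cl.
by apply: length_le_add lenn lenl => //; apply: descending_sub0.
Qed.

Lemma hilb_samuel_le (X Y : nat -> mset M) hX hY n n' c :
  descending X -> descending Y -> hilb_num X hX -> hilb_num Y hY ->
  (forall l, length_le (Y 0%N) (Y n') l -> length_le (X 0%N) (X n) (l + c)) ->
  hilb_samuel hX n <= hilb_samuel hY n' + c%:Z.
Proof.
move=> dX dY hXX hYY len.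
have [k [[ck _] <-]] := hilb_num_length dX hXX n.
have [l [[_ lenl] <-]] := hilb_num_length dY hYY n'.
by rewrite -PoszD lez_nat; apply: len lenl _ ck.
Qed.

End Submodules.
Arguments msetT {R M}.

Section Filtrations.
Variables (R : comNzRingType) (M : lmodType R) (q : mset R) (F : nat -> mset M) (a : R).
Hypotheses (qF : q_filtration q F) (qa : q a).
Local Notation Nf := (@N_filt R M a).
Local Notation Ef := (E_filt a F).

Lemma q_filtration_scale j x : F j x -> F j.+1 (a *: x).
Proof.
case: qF => _ _ _ qFF Fx; apply: qFF.
by exists 1%N, (fun _ => a), (fun _ => x); rewrite big_ord1.
Qed.

Lemma q_filtration_descending : descending F.
Proof. by case: qF. Qed.

Lemma q_filtration0 : F 0%N = msetT.
Proof. by case: qF => F0 _ _ _; apply: mext. Qed.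

Lemma N_filtE j : Nf j = mimg (a ^+ j) msetT.
Proof. by apply: mext => x; split=> [[y ->]|[y [_ ->]]]; exists y. Qed.

Lemma N_filt0 : Nf 0%N = msetT.
Proof. by rewrite N_filtE; apply: mext => x; split => // _; exists x; rewrite scale1r. Qed.

Lemma N_filt_descending : descending Nf.
Proof.
split=> j; first by rewrite N_filtE; apply/mimg_submod/msetT_submod.
by move=> x [y ->]; exists (a *: y); rewrite scalerA -exprSr.
Qed.

Lemma N_filt_sub j : msub (Nf j) (F j).
Proof.
elim: j => [|j IH] x [y ->]; first by rewrite q_filtration0.
by rewrite exprS -scalerA; apply/q_filtration_scale/IH; exists y.
Qed.

Lemma E_filt_descending : descending Ef.
Proof.
have [SF DF] := q_filtration_descending; split=> [[|j]|[|j] x]; rewrite //=.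
- exact: (mimg_submod (a ^+ j) (SF 1%N)).
- case=> y [F1y ->]; exists (a *: y); rewrite scalerA -exprSr.
  by split => //; apply/DF/q_filtration_scale.
Qed.

Lemma length_le_F_N n l :
  length_le (Nf 0%N) (Nf n) l -> length_le (F 0%N) (F n) l.
Proof.
rewrite N_filt0 q_filtration0; apply: length_le_mono => //; last exact: N_filt_sub.
by have [] := N_filt_descending.
Qed.

Lemma length_le_E_N n l1 l2 : length_le (F 0%N) (F 1%N) l2 ->
  length_le (Nf 0%N) (Nf n) l1 ->
  length_le (Ef 0%N) (Ef n.+1) (l1 + l2).
Proof.
rewrite N_filt0 q_filtration0 => len2 len1.
have [[SN _] [SF _]] := (N_filt_descending, q_filtration_descending).
have E_N : msub (Ef n.+1) (Nf n) by move=> x [y [_ ->]]; exists y.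
apply: (length_le_add (SN n) E_N) => //.
rewrite N_filtE; apply: length_le_img; first exact: msetT_submod.
by apply: (length_le_mono _ (SF 1%N) _ _ len2) => // x F1x; split => //; exists x.
Qed.

Lemma length_le_N_E n l1 l2 : length_le (Nf 0%N) (Nf 1%N) l2 ->
  length_le (Ef 0%N) (Ef n.+1) l1 ->
  length_le (Nf 0%N) (Nf n.+1) (l1 + l2).
Proof.
rewrite N_filt0 => len2 len1.
have [[SE _] [SN _]] := (E_filt_descending, N_filt_descending).
have [SF _] := q_filtration_descending.
have a_F1 y : F 1%N (a *: y) by apply: q_filtration_scale; rewrite q_filtration0.
have N_E : msub (Nf n.+1) (Ef n.+1).
  by move=> x [y ->]; exists (a *: y); rewrite scalerA -exprSr.
apply: (length_le_add (SE n.+1) N_E) => //.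
apply: length_le_img; first exact: SF.
apply: (length_le_mono _ (SN 1%N) _ _ len2) => // x [y ->].
by split; [rewrite expr1 | exists y; rewrite scalerA -exprSr].
Qed.

End Filtrations.

Theorem proposition2p7 (R : comNzRingType) (M : lmodType R)
  (m q : mset R) (F : nat -> mset M) (a : R) (hE hN hM : {poly int}) :
  noetherian R -> is_local m -> infinite_residue m -> m_primary m q ->
  fin_gen M -> module_dim_one M ->
  good_filtration q F -> superficial q F a ->
  hilb_num (E_filt a F) hE -> hilb_num (@N_filt R M a) hN -> hilb_num F hM ->
  hilb_e 0 hM - hM`_0 <= hilb_e 1 hE - hilb_e 1 hN.
Proof.
move=> _ _ _ _ _ _ [qF _] [qa _] hEE hNN hMM.
have dF := q_filtration_descending qF; have dE := E_filt_descending qF qa.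
have dN := @N_filt_descending R M a.
have [lF1 [lenF1 lF1E]] := hMM 0%N; rewrite big_ord1 /= in lF1E.
have [lE1 [lenE1 _]] := hEE 0%N; have [lN1 [[_ lenN1] _]] := hNN 0%N.
have E1 : E_filt a F 1%N = F 1%N.
  by apply: mext => x; split=> [[y [F1y ->]]|F1x]; [|exists x]; rewrite scale1r.
have eq_l1 : lE1 = lF1.
  by apply: (has_length_unique lenE1); rewrite E1; move: lenF1; rewrite (q_filtration0 qF).
rewrite -lF1E -eq_l1; apply: hilb_e1_comparison => n.
- rewrite -[X in _ <= X]addr0; apply: (hilb_samuel_le (c := 0%N) dF dN hMM hNN) => l.
  by rewrite addn0 => /(length_le_F_N qF qa).
- apply: (hilb_samuel_le dE dN hEE hNN) => l; apply: (length_le_E_N qF).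
  by rewrite eq_l1; case: lenF1.
- by apply: (hilb_samuel_le dN dE hNN hEE) => l; apply: (length_le_N_E qF qa lenN1).
Qed.
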